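(* Let $(X,d),(Y,d)$ be metric spaces, $E,F$ strictly convex normed spaces over $\mathbb{K}$, and $T:\mathrm{Lip}(X,E)\to\mathrm{Lip}(Y,F)$ a surjective linear isometry satisfying Property P. If $f\in\mathrm{Lip}(X,E)$ satisfies $\|Tf(y_0)\|=\|Tf\|_\infty>L(Tf)$ for some $y_0\in Y$, then $L(f)\le\|f\|_\infty$.
   Context: $\mathbb{K}=\mathbb{R}$ or $\mathbb{C}$. Strictly convex: $\|e_1+e_2\|<2$ whenever $e_1\ne e_2$ have norm $1$. $\mathrm{Lip}(X,E)$: bounded Lipschitz maps $X\to E$, with Lipschitz number $L(f)$ and norm $\|f\|_L=\max\{\|f\|_\infty,L(f)\}$; $T$ is an isometry for this norm. For $e\in E$, $\tilde e$ is the constant function with value $e$; Property P: for every $y\in Y$ there is $e\in E$ with $(T\tilde e)(y)\ne0$. *)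

From HB Require Import structures.
From mathcomp Require Import all_boot all_order all_algebra.
From mathcomp Require Import complex.
From mathcomp Require Import classical_sets reals.
Set Implicit Arguments. Unset Strict Implicit. Unset Printing Implicit Defensive.
Import Order.TTheory GRing.Theory Num.Theory.
Local Open Scope ring_scope.
Local Open Scope classical_set_scope.

Definition scalarK (R : realType) (b : bool) : fieldType :=
  if b then (R[i] : fieldType) else (R : fieldType).

Definition absK (R : realType) (b : bool) : scalarK R b -> R :=
  match b as b return scalarK R b -> R with
  | true => fun z : R[i] => ComplexField.Normc.normc z
  | false => fun x : R => `|x|
  end.

Definition is_metric (R : realType) (X : Type) (d : X -> X -> R) : Prop :=
  [/\ forall x y, 0 <= d x y,
      forall x y, d x y = 0 <-> x = y,
      forall x y, d x y = d y x &
      forall x y z, d x z <= d x y + d y z].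

Definition is_norm (R : realType) (b : bool) (E : lmodType (scalarK R b))
    (nrm : E -> R) : Prop :=
  [/\ forall e, 0 <= nrm e,
      forall e, nrm e = 0 -> e = 0,
      forall (a : scalarK R b) e, nrm (a *: e) = absK a * nrm e &
      forall e1 e2, nrm (e1 + e2) <= nrm e1 + nrm e2].

Definition strictly_convex (R : realType) (b : bool) (E : lmodType (scalarK R b))
    (nrm : E -> R) : Prop :=
  forall e1 e2 : E, nrm e1 = 1 -> nrm e2 = 1 -> e1 <> e2 -> nrm (e1 + e2) < 2.

Definition supnorm (R : realType) (X E : Type) (nrm : E -> R) (f : X -> E) : R :=
  sup [set nrm (f x) | x in [set: X]].

Definition lipnum (R : realType) (X : Type) (d : X -> X -> R) (b : bool)
    (E : lmodType (scalarK R b)) (nrm : E -> R) (f : X -> E) : R :=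
  sup [set nrm (f p.1 - f p.2) / d p.1 p.2 | p in [set p : X * X | p.1 <> p.2]].

Definition is_Lip (R : realType) (X : Type) (d : X -> X -> R) (b : bool)
    (E : lmodType (scalarK R b)) (nrm : E -> R) (f : X -> E) : Prop :=
  (exists M : R, forall x, nrm (f x) <= M) /\
  (exists L : R, forall x y, nrm (f x - f y) <= L * d x y).

Definition lipnorm (R : realType) (X : Type) (d : X -> X -> R) (b : bool)
    (E : lmodType (scalarK R b)) (nrm : E -> R) (f : X -> E) : R :=
  Num.max (supnorm nrm f) (lipnum d nrm f).

From HB Require Import structures.
From mathcomp Require Import all_boot all_order all_algebra.
From mathcomp Require Import complex.
From mathcomp Require Import classical_sets reals.
From mathcomp Require Import lra.
Import Order.TTheory GRing.Theory Num.Theory.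
Local Open Scope ring_scope.
Local Open Scope classical_set_scope.

(* Suppose L(f) > ||f||_oo, so that ||f||_L = L(f) = ||Tf||_oo = ||Tf(y0)||.
   Adding a small constant s e to f changes neither L(f) nor ||f||_L, hence
   ||Tf(y0) + s (T e~)(y0)|| <= ||Tf(y0)|| for s = r and s = -r.  By strict
   convexity of F this forces (T e~)(y0) = 0 for every e, contradicting
   Property P. *)

Set Implicit Arguments.

Definition realK (R : realType) (b : bool) : {rmorphism R -> scalarK R b} :=
  match b return {rmorphism R -> scalarK R b} with
  | true => real_complex R
  | false => idfun
  end.
Arguments realK {R} b.

Lemma absK_realK (R : realType) (b : bool) (r : R) : absK (realK b r) = `|r|.
Proof. by case: b => //=; rewrite expr0n /= addr0 sqrtr_sqr. Qed.

Section SupBounds.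
Variable R : realType.
Implicit Types (A : set R) (c : R).

Lemma sup_ge0 A : (forall z, A z -> 0 <= z) -> 0 <= sup A.
Proof.
move=> A_ge0; have [[[z Az] A_ub]|A_nosup] := boolp.pselect (has_sup A).
  exact: le_trans (A_ge0 z Az) (sup_upper_bound (conj (ex_intro _ z Az) A_ub) Az).
by rewrite sup_out.
Qed.

Lemma sup_le_ge0 A c : 0 <= c -> ubound A c -> sup A <= c.
Proof.
move=> c_ge0 A_c; have [A_n0|A_0] := boolp.pselect (A !=set0); first exact: ge_sup.
suff -> : A = set0 by rewrite sup0.
by apply/seteqP; split => // z Az; apply: A_0; exists z.
Qed.

End SupBounds.

Section NormedSpace.
Variables (R : realType) (b : bool) (E : lmodType (scalarK R b)) (nE : E -> R).
Hypothesis nE_norm : is_norm nE.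

Lemma nrm_ge0 e : 0 <= nE e.
Proof. by case: nE_norm. Qed.

Lemma nrmD e1 e2 : nE (e1 + e2) <= nE e1 + nE e2.
Proof. by case: nE_norm. Qed.

Lemma nrmZ_realK r e : nE (realK b r *: e) = `|r| * nE e.
Proof. by case: nE_norm => _ _ nrmZ _; rewrite nrmZ absK_realK. Qed.

Lemma nrm0 : nE 0 = 0.
Proof. by rewrite -(scale0r 0) -(rmorph0 (realK b)) nrmZ_realK normr0 mul0r. Qed.

Lemma nrm_eq0 e : (nE e == 0) = (e == 0).
Proof.
apply/eqP/eqP => [|->]; last exact: nrm0.
by case: nE_norm => _ nrm_eq0 _ _; apply: nrm_eq0.
Qed.

Lemma nrmMn e n : nE (e *+ n) = n%:R * nE e.
Proof. by rewrite -scaler_nat -(rmorph_nat (realK b)) nrmZ_realK normr_nat. Qed.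

Hypothesis nE_strict : strictly_convex nE.

Lemma strictly_convex_eq a c m :
  nE a = m -> nE c = m -> nE (a + c) = 2 * m -> a = c.
Proof.
move=> na nc nac; have [m0|m_neq0] := eqVneq m 0.
  move: na nc; rewrite m0 => /eqP; rewrite nrm_eq0 => /eqP-> /eqP.
  by rewrite nrm_eq0 => /eqP->.
have m_gt0 : 0 < m by rewrite lt_neqAle eq_sym m_neq0 -na nrm_ge0.
pose k := realK b m^-1.
have nrm_k w : nE (k *: w) = m^-1 * nE w by rewrite nrmZ_realK ger0_norm ?invr_ge0 ?ltW.
apply: (scalerI (a := k)); first by rewrite fmorph_eq0 invr_eq0.
apply: boolp.contrapT => ka_neq_kc.
have := @nE_strict (k *: a) (k *: c); rewrite -scalerDr !nrm_k na nc nac.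
by rewrite mulVf // mulrCA mulVf // mulr1 ltxx => /(_ erefl erefl ka_neq_kc).
Qed.

Lemma strictly_convex_pm_eq0 w x :
  nE (w + x) <= nE w -> nE (w - x) <= nE w -> x = 0.
Proof.
move=> nwDx nwBx.
have sum_eq : (w + x) + (w - x) = w *+ 2 by rewrite addrACA subrr addr0 mulr2n.
have nsum : nE ((w + x) + (w - x)) = 2 * nE w by rewrite sum_eq nrmMn.
have := nrmD (w + x) (w - x); rewrite nsum => tri.
have nwDx_eq : nE (w + x) = nE w by apply/eqP; rewrite eq_le nwDx /=; lra.
have nwBx_eq : nE (w - x) = nE w by apply/eqP; rewrite eq_le nwBx /=; lra.
move: (strictly_convex_eq nwDx_eq nwBx_eq nsum) => /addrI /eqP.
rewrite -subr_eq0 opprK -mulr2n -nrm_eq0 nrmMn mulf_eq0 pnatr_eq0 /= nrm_eq0.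
by move/eqP.
Qed.

End NormedSpace.

Section LipschitzFunctions.
Variables (R : realType) (b : bool) (X : Type) (d : X -> X -> R).
Variables (E : lmodType (scalarK R b)) (nE : E -> R).
Implicit Types (f : X -> E) (e : E).

Lemma lipnum_addl e f : lipnum d nE (fun x => e + f x) = lipnum d nE f.
Proof.
rewrite /lipnum; congr sup; apply/seteqP; split => _ [p p_neq <-];
  by exists p => //; rewrite opprD addrACA subrr add0r.
Qed.

Hypothesis nE_norm : is_norm nE.

Lemma is_Lip_cst e : is_Lip d nE (fun _ => e).
Proof. by split; [exists (nE e) | exists 0 => x y; rewrite subrr nrm0 // mul0r]. Qed.

Lemma is_Lip_addl e f : is_Lip d nE f -> is_Lip d nE (fun x => e + f x).
Proof.
move=> [[M f_le] [L f_lip]]; split.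
  by exists (nE e + M) => x; apply: le_trans (nrmD nE_norm _ _) _; rewrite lerD2l.
by exists L => x y; rewrite opprD addrACA subrr add0r.
Qed.

Lemma supnorm_ge0 f : 0 <= supnorm nE f.
Proof. by apply: sup_ge0 => _ [x _ <-]; apply: nrm_ge0. Qed.

Lemma le_supnorm f x : (exists M, forall x, nE (f x) <= M) -> nE (f x) <= supnorm nE f.
Proof. by move=> [M f_le]; apply: ub_le_sup; [exists M => _ [y _ <-] | exists x]. Qed.

Lemma supnorm_le f c : 0 <= c -> (forall x, nE (f x) <= c) -> supnorm nE f <= c.
Proof. by move=> c_ge0 f_le; apply: sup_le_ge0 => // _ [x _ <-]. Qed.

Lemma lipnorm_addl e f : is_Lip d nE f ->
  nE e + supnorm nE f <= lipnum d nE f ->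
  lipnorm d nE (fun x => e + f x) = lipnum d nE f.
Proof.
move=> [f_bnd _] small; rewrite /lipnorm lipnum_addl; apply/max_r/le_trans/small.
apply: supnorm_le => [|x]; first by rewrite addr_ge0 ?nrm_ge0 ?supnorm_ge0.
by apply: le_trans (nrmD nE_norm _ _) _; rewrite lerD2l le_supnorm.
Qed.

End LipschitzFunctions.

Section LipIsometry.
Variables (R : realType) (b : bool) (X : Type) (dX : X -> X -> R).
Variables (Y : Type) (dY : Y -> Y -> R).
Variables (E : lmodType (scalarK R b)) (nE : E -> R).
Variables (F : lmodType (scalarK R b)) (nF : F -> R).
Hypothesis nE_norm : is_norm nE.
Variable T : (X -> E) -> (Y -> F).
Hypothesis T_Lip : forall f, is_Lip dX nE f -> is_Lip dY nF (T f).
Hypothesis T_lin : forall (a : scalarK R b) (f g : X -> E),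
  is_Lip dX nE f -> is_Lip dX nE g ->
  T (fun x => a *: f x + g x) = (fun y => a *: T f y + T g y).
Hypothesis T_isom : forall f, is_Lip dX nE f -> lipnorm dY nF (T f) = lipnorm dX nE f.

Lemma nrm_isometry_add_cst_le f e s y : is_Lip dX nE f ->
  `|s| * nE e + supnorm nE f <= lipnum dX nE f ->
  nF (realK b s *: T (fun _ => e) y + T f y) <= lipnum dX nE f.
Proof.
move=> f_Lip small; pose g x := realK b s *: e + f x.
have g_Lip : is_Lip dX nE g by apply: is_Lip_addl.
have <- : T g y = realK b s *: T (fun _ => e) y + T f y.
  by rewrite /g (T_lin _ (is_Lip_cst dX nE_norm e) f_Lip).
rewrite -(lipnorm_addl nE_norm (realK b s *: e) f_Lip) ?nrmZ_realK // -T_isom //.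
rewrite /lipnorm le_max le_supnorm //; exact: (T_Lip g_Lip).1.
Qed.

End LipIsometry.

Unset Implicit Arguments.

Theorem lemma4p3 (R : realType) (b : bool)
  (X : Type) (dX : X -> X -> R) (hX : is_metric dX)
  (Y : Type) (dY : Y -> Y -> R) (hY : is_metric dY)
  (E : lmodType (scalarK R b)) (nE : E -> R) (hnE : is_norm nE)
  (hsE : strictly_convex nE)
  (F : lmodType (scalarK R b)) (nF : F -> R) (hnF : is_norm nF)
  (hsF : strictly_convex nF)
  (T : (X -> E) -> (Y -> F))
  (T_Lip : forall f, is_Lip dX nE f -> is_Lip dY nF (T f))
  (T_lin : forall (a : scalarK R b) (f g : X -> E),
      is_Lip dX nE f -> is_Lip dX nE g ->
      T (fun x => a *: f x + g x) = (fun y => a *: T f y + T g y))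
  (T_isom : forall f, is_Lip dX nE f -> lipnorm dY nF (T f) = lipnorm dX nE f)
  (T_surj : forall g, is_Lip dY nF g -> exists2 f, is_Lip dX nE f & T f = g)
  (T_P : forall y : Y, exists e : E, T (fun _ => e) y <> 0)
  (f : X -> E) (hf : is_Lip dX nE f) (y0 : Y)
  (hy0 : nF (T f y0) = supnorm nF (T f))
  (hlt : lipnum dY nF (T f) < supnorm nF (T f)) :
  lipnum dX nE f <= supnorm nE f.
Proof.
rewrite leNgt; apply/negP => hgt; have [e Te_y0] := T_P y0.
have supTf : supnorm nF (T f) = lipnum dX nE f.
  by move: (T_isom f hf); rewrite /lipnorm (max_l (ltW hlt)) (max_r (ltW hgt)).
pose r := (lipnum dX nE f - supnorm nE f) / (nE e + 1).
have e1_gt0 : 0 < nE e + 1 by rewrite ltr_wpDl ?nrm_ge0.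
have r_gt0 : 0 < r by rewrite divr_gt0 ?subr_gt0.
have r_small : r * nE e + supnorm nE f <= lipnum dX nE f.
  rewrite -lerBrDr mulrAC ler_pdivrMr // ler_pM2l ?subr_gt0 //; lra.
have shift s : `|s| = r -> nF (T f y0 + realK b s *: T (fun _ => e) y0) <= nF (T f y0).
  move=> s_r; rewrite hy0 supTf addrC.
  by apply: (nrm_isometry_add_cst_le hnE _ T_Lip T_lin T_isom); rewrite ?s_r.
have : realK b r *: T (fun _ => e) y0 = 0.
  apply: (strictly_convex_pm_eq0 hnF hsF); first by apply: shift; rewrite gtr0_norm.
  by rewrite -scaleNr -rmorphN; apply: shift; rewrite normrN gtr0_norm.
by move/eqP; rewrite scaler_eq0 fmorph_eq0 gt_eqF //= => /eqP.
Qed.
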